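(* Let $\Phi$ be the root system of type $A_{n-1}$ and let $d\le n$ be a positive integer. Then \[ \operatorname{Var}(\mathcal{X}_{\Phi^+_{=d}})=\begin{cases}\frac{1}{12}(n+d) & \text{if } 2d\le n,\\ \frac14(n-d) & \text{if } 2d\ge n,\end{cases} \] \[ \operatorname{Var}(\mathcal{X}_{\Phi^+_{\le d}})=\begin{cases}\frac{1}{18}d^3+\frac1{24}d^2+(\frac1{12}n-\frac1{72})d & \text{if } 2d\le n,\\ -\frac16 d^3+(\frac13 n-\frac7{24})d^2+(-\frac16 n^2+\frac5{12}n-\frac18)d+(\frac1{36}n^3-\frac1{12}n^2+\frac1{18}n) & \text{if } 2d\ge n.\end{cases} \]
   Context: Type $A_{n-1}$ is realized in $\mathbb{R}^n$ with standard basis $e_1,\dots,e_n$: simple roots $e_{i+1}-e_i$ ($1\le i<n$), positive roots $e_j-e_i$ ($1\le i<j\le n$), all roots $e_j-e_i$ ($i\ne j$); the height of $e_j-e_i$ is $j-i$. The Weyl group $W$ is the symmetric group $\mathcal{S}_n$ permuting coordinates. $\Phi^+_{=d}$ (resp. $\Phi^+_{\le d}$) is the set of positive roots of height exactly $d$ (resp. at most $d$). For $\beta\in\Phi^+$, $\mathcal{X}_\beta$ is the Bernoulli random variable on $W$ (uniform) with $\mathcal{X}_\beta(w)=1$ if $w(\beta)$ is a negative root and $0$ otherwise; $\mathcal{X}_\Psi=\sum_{\beta\in\Psi}\mathcal{X}_\beta$. *)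

From HB Require Import structures.
From mathcomp Require Import all_boot all_order all_algebra all_fingroup.
Set Implicit Arguments. Unset Strict Implicit. Unset Printing Implicit Defensive.
Import Order.TTheory GRing.Theory Num.Theory.
Local Open Scope ring_scope.

(* Type A_{n-1} in R^n with basis e_0..e_{n-1} (0-based indices).
   The root e_j - e_i is encoded by the pair (i, j), i <> j; it is positive
   iff i < j, with height j - i.  W = S_n acts by permuting coordinates:
   w (e_j - e_i) = e_{w j} - e_{w i}, which is negative iff w j < w i. *)

Definition posroot n (p : 'I_n * 'I_n) : bool := (p.1 < p.2)%N.
Definition height n (p : 'I_n * 'I_n) : nat := (p.2 - p.1)%N.

Definition negroot_image n (w : 'S_n) (p : 'I_n * 'I_n) : bool :=
  (w p.2 < w p.1)%N.

Definition Xbeta n (p : 'I_n * 'I_n) (w : 'S_n) : nat := negroot_image w p.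

Definition XPsi n (P : pred ('I_n * 'I_n)) (w : 'S_n) : nat :=
  (\sum_(p : 'I_n * 'I_n | posroot p && P p) Xbeta p w)%N.

Definition Phi_eq (n : nat) (d : nat) : pred ('I_n * 'I_n) := fun p => height p == d.
Definition Phi_le (n : nat) (d : nat) : pred ('I_n * 'I_n) := fun p => (height p <= d)%N.

Definition Expect n (X : 'S_n -> rat) : rat :=
  (\sum_(w : 'S_n) X w) / #|{perm 'I_n}|%:R.
Definition Var n (X : 'S_n -> nat) : rat :=
  Expect (fun w => (X w)%:R ^+ 2) - (Expect (fun w => (X w)%:R)) ^+ 2.
Arguments Phi_eq : clear implicits.
Arguments Phi_le : clear implicits.

From HB Require Import structures.
From mathcomp Require Import all_boot all_order all_algebra all_fingroup.
From mathcomp Require Import zify ring lra.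
Set Implicit Arguments. Unset Strict Implicit. Unset Printing Implicit Defensive.
Import Order.TTheory GRing.Theory Num.Theory.
Local Open Scope ring_scope.

(* For two
   positive roots, the joint law of (X_b, X_g) only involves the relative order
   of w on at most four points, which is uniform; this gives
   Cov(X_b, X_g) = ([b = g] + <b, g>) / 12, with <_, _> the inner product of the
   roots e_j - e_i.  Summing over Psi, Var X_Psi = (|Psi| + |sum_(b in Psi) b|^2) / 12.
   When Psi is cut out by a condition H on the height, the j-th coordinate of
   sum_(b in Psi) b is c_j - c_(n-1-j), where c_m counts the h in [1, m] with H h,
   and |Psi| = sum_j c_j; both sums are sums of piecewise polynomial functions of j. *)

Section UniformPermutation.
Variable n : nat.
Implicit Types (X Y : 'S_n -> rat) (P Q R : pred 'S_n).

Lemma eq_Expect X Y : X =1 Y -> Expect X = Expect Y.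
Proof. by move=> eXY; rewrite /Expect (eq_bigr _ (fun w _ => eXY w)). Qed.

Lemma ExpectD X Y : Expect (fun w => X w + Y w) = Expect X + Expect Y.
Proof. by rewrite /Expect big_split mulrDl. Qed.

Lemma Expect_sum (I : finType) (A : pred I) (X : I -> 'S_n -> rat) :
  Expect (fun w => \sum_(i | A i) X i w) = \sum_(i | A i) Expect (X i).
Proof. by rewrite /Expect exchange_big mulr_suml. Qed.

Lemma Expect_cst c : Expect (fun _ : 'S_n => c) = c.
Proof.
have Nn0 : #|{perm 'I_n}|%:R != 0 :> rat by rewrite pnatr_eq0 card_Sn -lt0n fact_gt0.
by rewrite /Expect sumr_const -[c *+ _]mulr_natr mulfK.
Qed.

Definition prob P : rat := Expect (fun w => (P w)%:R).

Lemma eq_prob P Q : P =1 Q -> prob P = prob Q.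
Proof. by move=> ePQ; apply: eq_Expect => w; rewrite ePQ. Qed.

Lemma prob_predT : prob predT = 1.
Proof. exact: Expect_cst. Qed.

Lemma prob_mull (s : 'S_n) P : prob (fun w => P (s * w)%g) = prob P.
Proof. by rewrite /prob /Expect [in RHS](reindex_inj (mulgI s)). Qed.

Lemma prob_mulr (s : 'S_n) P : prob (fun w => P (w * s)%g) = prob P.
Proof. by rewrite /prob /Expect [in RHS](reindex_inj (mulIg s)). Qed.

Lemma prob_add P Q R : (forall w, P w + Q w = R w)%N -> prob P + prob Q = prob R.
Proof. by move=> PQR; rewrite /prob -ExpectD; apply: eq_Expect => w; rewrite -natrD PQR. Qed.

Lemma perm_val_neq (w : 'S_n) a b : a != b -> (w a : nat) != w b.
Proof. by rewrite val_eqE (inj_eq perm_inj). Qed.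

Lemma prob_lt a b : a != b -> prob (fun w => w a < w b)%N = 1 / 2.
Proof.
move=> ab.
have swap : prob (fun w => w a < w b)%N = prob (fun w => w b < w a)%N.
  rewrite -(prob_mull (tperm a b)); apply: eq_prob => w.
  by rewrite !permM tpermL tpermR.
have total : prob (fun w => w a < w b)%N + prob (fun w => w b < w a)%N = 1.
  rewrite -prob_predT; apply: prob_add => w /=.
  have := perm_val_neq w ab; lia.
lra.
Qed.

Lemma prob_max3 a b c : a != b -> a != c -> b != c ->
  prob (fun w => (w b < w a) && (w c < w a))%N = 1 / 3.
Proof.
move=> ab ac bc.
pose max_at (x y z : 'I_n) (w : 'S_n) := (w y < w x)%N && (w z < w x)%N.
have max_ab : prob (max_at a b c) = prob (max_at b a c).
  rewrite -(prob_mull (tperm a b)); apply: eq_prob => w.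
  by rewrite /max_at !permM tpermL tpermR tpermD // eq_sym.
have max_ac : prob (max_at a b c) = prob (max_at c a b).
  rewrite -(prob_mull (tperm a c)); apply: eq_prob => w.
  by rewrite /max_at !permM tpermL tpermR tpermD 1?andbC // eq_sym.
have total : prob (max_at a b c) + prob (max_at b a c) + prob (max_at c a b) = 1.
  rewrite (@prob_add _ _ (fun w => max_at a b c w || max_at b a c w)) => [|w].
    rewrite (@prob_add _ _ predT) ?prob_predT // => w /=.
    have := perm_val_neq w ab; have := perm_val_neq w ac; have := perm_val_neq w bc.
    by rewrite /max_at; lia.
  by have := perm_val_neq w ab; rewrite /max_at; lia.
rewrite -/(max_at a b c); lra.
Qed.

Lemma prob_min3 a b c : a != b -> a != c -> b != c ->
  prob (fun w => (w a < w b) && (w a < w c))%N = 1 / 3.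
Proof.
move=> ab ac bc; rewrite -(prob_mulr (perm (@rev_ord_inj n))) -(prob_max3 ab ac bc).
apply: eq_prob => w; rewrite !permM !permE /=.
by have := ltn_ord (w a); have := ltn_ord (w b); have := ltn_ord (w c); lia.
Qed.

Lemma prob_chain3 a b c : a != b -> a != c -> b != c ->
  prob (fun w => (w c < w b) && (w b < w a))%N = 1 / 6.
Proof.
move=> ab ac bc.
have swap : prob (fun w => (w c < w b) && (w b < w a))%N =
            prob (fun w => (w b < w c) && (w c < w a))%N.
  rewrite -(prob_mull (tperm b c)); apply: eq_prob => w.
  by rewrite !permM tpermL tpermR tpermD // eq_sym.
have split_max : prob (fun w => (w c < w b) && (w b < w a))%N +
                 prob (fun w => (w b < w c) && (w c < w a))%N = 1 / 3.
  rewrite -(prob_max3 ab ac bc); apply: prob_add => w.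
  by have := perm_val_neq w bc; lia.
lra.
Qed.

Lemma prob_lt_lt a b c e : a != b -> c != e -> a != c -> a != e -> b != c -> b != e ->
  prob (fun w => (w b < w a) && (w e < w c))%N = 1 / 4.
Proof.
move=> ab ce ac ae bc be.
have swap : prob (fun w => (w b < w a) && (w e < w c))%N =
            prob (fun w => (w a < w b) && (w e < w c))%N.
  rewrite -(prob_mull (tperm a b)); apply: eq_prob => w.
  by rewrite !permM tpermL tpermR !tpermD.
have split_lt : prob (fun w => (w b < w a) && (w e < w c))%N +
                prob (fun w => (w a < w b) && (w e < w c))%N = 1 / 2.
  rewrite -(prob_lt (_ : e != c)) 1?eq_sym //; apply: prob_add => w.
  by have := perm_val_neq w ab; lia.
lra.
Qed.

Lemma Var_sum (I : finType) (A : pred I) (X : I -> 'S_n -> nat) :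
  Var (fun w => \sum_(i | A i) X i w)%N =
  \sum_(i | A i) \sum_(k | A k)
    (Expect (fun w => (X i w * X k w)%:R)
     - Expect (fun w => (X i w)%:R) * Expect (fun w => (X k w)%:R)).
Proof.
have square w : ((\sum_(i | A i) X i w)%N%:R : rat) ^+ 2 =
                \sum_(i | A i) \sum_(k | A k) (X i w * X k w)%:R.
  rewrite natr_sum expr2 big_distrlr; apply: eq_bigr => i _.
  by apply: eq_bigr => k _; rewrite natrM.
rewrite /Var (eq_Expect square) (eq_Expect (fun w => natr_sum _ _ _ _)) !Expect_sum.
rewrite expr2 big_distrlr -sumrB; apply: eq_bigr => i _.
by rewrite Expect_sum -sumrB.
Qed.

End UniformPermutation.

Lemma sum_height_count (H : pred nat) j :
  (\sum_(0 <= i < j) H (j - i))%N = count H (iota 1 j).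
Proof.
elim: j => [|j IH]; first by rewrite big_geq.
rewrite big_nat_recl // subn0; under eq_big_nat => i _ do rewrite subSS.
by rewrite IH -addn1 iotaD count_cat /= addn0 addnC add1n addn1.
Qed.

Lemma sum_ord_below_height (H : pred nat) j m : (j <= m)%N ->
  (\sum_(i < m) ((i < j) && H (j - i)))%N = count H (iota 1 j).
Proof.
move=> jm; rewrite -(big_mkord xpredT (fun i => ((i < j) && H (j - i))%N : nat)).
rewrite (big_cat_nat (leq0n j) jm) /= [X in (_ + X)%N]big_nat_cond.
rewrite [X in (_ + X)%N]big1 => [|i /andP[/andP[ji _] _]]; last by rewrite ltnNge ji.
by rewrite addn0 -sum_height_count; apply: eq_big_nat => i /andP[_ ->].
Qed.

Section RootVariance.
Variable n : nat.
Implicit Types b g : 'I_n * 'I_n.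

Definition root_coord (b : 'I_n * 'I_n) (j : 'I_n) : rat :=
  (b.2 == j)%:R - (b.1 == j)%:R.

Lemma sum_indicator_mul (x y : 'I_n) :
  \sum_j ((x == j)%:R * (y == j)%:R : rat) = (x == y)%:R.
Proof.
rewrite (bigD1 x) //= eqxx mul1r big1 ?addr0 1?eq_sym // => j /negbTE.
by rewrite eq_sym => ->; rewrite mul0r.
Qed.

Lemma root_dot b g :
  \sum_j root_coord b j * root_coord g j =
  (b.2 == g.2)%:R - (b.2 == g.1)%:R - (b.1 == g.2)%:R + (b.1 == g.1)%:R.
Proof.
under eq_bigr do rewrite /root_coord mulrBl !mulrBr.
by rewrite !sumrB !sum_indicator_mul; ring.
Qed.

Lemma ord_ltn_eqF (x y : 'I_n) : (x < y)%N -> (x == y) = false /\ (y == x) = false.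
Proof. by move=> xy; split; [|rewrite eq_sym]; apply: ltn_eqF. Qed.

Lemma prob_negroot_pair b g : posroot b -> posroot g ->
  prob (fun w => negroot_image w b && negroot_image w g) =
  1 / 4 + ((b == g)%:R + \sum_j root_coord b j * root_coord g j) / 12.
Proof.
rewrite root_dot; case: b g => [i j] [k l]; rewrite /posroot /negroot_image xpair_eqE /=.
have [<- | ik] := eqVneq i k; have [<- | jl] := eqVneq j l => ij kl.
- have [ijF jiF] := ord_ltn_eqF ij.
  rewrite ijF jiF (eq_prob (fun w => andbb _)) prob_lt ?jiF //; lra.
- have [ijF jiF] := ord_ltn_eqF ij; have [ilF _] := ord_ltn_eqF kl.
  rewrite ilF jiF prob_max3 ?ijF ?ilF //; lra.
- have [ijF jiF] := ord_ltn_eqF ij; have [_ jkF] := ord_ltn_eqF kl.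
  rewrite ijF jkF prob_min3 ?jiF ?jkF //; lra.
move: ij kl; have [<- | jk] := eqVneq j k => ij kl.
  have [ijF _] := ord_ltn_eqF ij; have [ilF _] := ord_ltn_eqF (ltn_trans ij kl).
  rewrite ilF (eq_prob (fun w => andbC _ _)) prob_chain3 ?ijF ?ilF //; lra.
move: ij kl; have [<- | il] := eqVneq i l => ij kl.
  have [ijF _] := ord_ltn_eqF ij; have [kiF _] := ord_ltn_eqF kl.
  have [kjF _] := ord_ltn_eqF (ltn_trans kl ij).
  rewrite prob_chain3 ?ijF ?kiF ?kjF //; lra.
have [ijF _] := ord_ltn_eqF ij; have [klF _] := ord_ltn_eqF kl.
rewrite prob_lt_lt ?ijF ?klF //; lra.
Qed.

Lemma prob_negroot b : posroot b -> prob (fun w => negroot_image w b) = 1 / 2.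
Proof. by case: b => i j /ord_ltn_eqF[_ jiF]; rewrite prob_lt ?jiF. Qed.

Lemma Var_XPsi (Q : pred ('I_n * 'I_n)) :
  Var (XPsi Q) =
  (\sum_(b | posroot b && Q b) 1
   + \sum_j (\sum_(b | posroot b && Q b) root_coord b j) ^+ 2) / 12.
Proof.
set Psi := fun b => posroot b && Q b.
have cov b g : Psi b -> Psi g ->
    Expect (fun w => (Xbeta b w * Xbeta g w)%:R)
    - Expect (fun w => (Xbeta b w)%:R) * Expect (fun w => (Xbeta g w)%:R) =
    ((b == g)%:R + \sum_j root_coord b j * root_coord g j) / 12.
  move=> /andP[pb _] /andP[pg _].
  rewrite (eq_Expect (fun w => congr1 (fun m => m%:R) (mulnb _ _))).
  rewrite [Expect _](prob_negroot_pair pb pg) [Expect _](prob_negroot pb).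
  rewrite [Expect _](prob_negroot pg); lra.
rewrite /XPsi Var_sum.
under eq_bigr => b Pb do rewrite (eq_bigr _ (fun g => cov b g Pb)).
under eq_bigr do rewrite -mulr_suml big_split.
rewrite -mulr_suml big_split; congr ((_ + _) / 12).
  apply: eq_bigr => b Pb; rewrite (bigD1 b) //= eqxx big1 ?addr0 // => g /andP[_].
  by rewrite eq_sym => /negbTE->.
under [RHS]eq_bigr do rewrite expr2 big_distrlr.
by rewrite [RHS]exchange_big; apply: eq_bigr => b _; rewrite [RHS]exchange_big.
Qed.

Lemma sum_indicator (x : 'I_n) : \sum_j ((x == j)%:R : rat) = 1.
Proof.
rewrite (bigD1 x) //= eqxx big1 ?addr0 // => j /negbTE.
by rewrite eq_sym => ->.
Qed.

Lemma sum_posroot_snd (H : pred nat) (j : 'I_n) :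
  \sum_(b | posroot b && H (height b)) ((b.2 == j)%:R : rat) = (count H (iota 1 j))%:R.
Proof.
rewrite big_mkcond /posroot /height /=.
rewrite -(pair_bigA _ (fun i k : 'I_n => if (i < k)%N && H (k - i)%N then (k == j)%:R else 0)) /=.
under eq_bigr => i _.
  rewrite (bigD1 j) //= eqxx big1 => [|k /negbTE->]; last by case: ifP.
  rewrite addr0 (_ : (if _ then _ else _) = ((i < j)%N && H (j - i)%N)%:R); last by case: ifP.
  over.
by rewrite -natr_sum sum_ord_below_height // ltnW.
Qed.

Lemma sum_posroot_fst (H : pred nat) (j : 'I_n) :
  \sum_(b | posroot b && H (height b)) ((b.1 == j)%:R : rat) =
  (count H (iota 1 (n - j.+1)))%:R.
Proof.
pose reflect_root (b : 'I_n * 'I_n) := (rev_ord b.2, rev_ord b.1).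
have reflectK : involutive reflect_root by case=> i k; rewrite /reflect_root !rev_ordK.
rewrite (reindex_inj (inv_inj reflectK)) -(sum_posroot_snd H (rev_ord j)).
apply: eq_big => [[i k] | [i k] _]; rewrite /reflect_root /posroot /height /=.
  have := ltn_ord i; have := ltn_ord k => ltin ltkn.
  by rewrite (_ : n - i.+1 - (n - k.+1) = k - i)%N; [congr (_ && _); lia | lia].
by rewrite (can2_eq rev_ordK rev_ordK).
Qed.

Lemma Var_XPsi_height (H : pred nat) (c : nat -> nat) :
  (forall m, count H (iota 1 m) = c m) ->
  Var (XPsi (fun b : 'I_n * 'I_n => H (height b))) =
  (\sum_(0 <= j < n) (c j)%:R
   + \sum_(0 <= j < n) ((c j)%:R - (c (n - j.+1)%N)%:R) ^+ 2) / 12.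
Proof.
move=> cE; rewrite Var_XPsi !big_mkord; congr ((_ + _) / 12).
  under eq_bigr => b _ do rewrite -(sum_indicator b.2).
  by rewrite exchange_big; apply: eq_bigr => j _; rewrite sum_posroot_snd cE.
apply: eq_bigr => j _.
by rewrite /root_coord sumrB sum_posroot_snd sum_posroot_fst !cE.
Qed.

End RootVariance.

Lemma count_pred1_iota d m : (0 < d)%N -> count (pred1 d) (iota 1 m) = (d <= m)%N.
Proof. by move=> d0; rewrite count_uniq_mem ?iota_uniq // mem_iota d0 add1n ltnS. Qed.

Lemma count_leq_iota d m : count (leq^~ d) (iota 1 m) = minn d m.
Proof.
elim: m => [|m IH] //; rewrite -[m.+1]addn1 iotaD count_cat IH /= add1n; lia.
Qed.

Lemma big_nat_piecewise (V : nmodType) (lo mid hi : nat) (F f g : nat -> V) :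
  (lo <= mid <= hi)%N ->
  (forall j, (lo <= j < mid)%N -> F j = f j) ->
  (forall j, (mid <= j < hi)%N -> F j = g j) ->
  \sum_(lo <= j < hi) F j = \sum_(lo <= j < mid) f j + \sum_(mid <= j < hi) g j.
Proof.
move=> /andP[lo_mid mid_hi] Ff Fg.
by rewrite (big_cat_nat lo_mid mid_hi) (eq_big_nat _ _ Ff) (eq_big_nat _ _ Fg).
Qed.

Lemma big_nat_piecewise3 (V : nmodType) (a b m : nat) (F f g h : nat -> V) :
  (a <= b <= m)%N ->
  (forall j, (j < a)%N -> F j = f j) ->
  (forall j, (a <= j < b)%N -> F j = g j) ->
  (forall j, (b <= j < m)%N -> F j = h j) ->
  \sum_(0 <= j < m) F j =
  \sum_(0 <= j < a) f j + \sum_(a <= j < b) g j + \sum_(b <= j < m) h j.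
Proof.
move=> /andP[ab bm] Ff Fg Fh; rewrite (@big_nat_piecewise _ 0 b m F F h) ?bm //.
by rewrite (@big_nat_piecewise _ 0 a b F f g) ?ab // => j /andP[_]; apply: Ff.
Qed.

Definition affine_sq_sum (R : numFieldType) (u v m : R) : R :=
  u ^+ 2 * m + u * v * m * (m - 1) + v ^+ 2 * (m - 1) * m * (2 * m - 1) / 6.

Lemma sum_affine_sq (R : numFieldType) (a b : nat) (u v : R) : (a <= b)%N ->
  \sum_(a <= j < b) (u + v * j%:R) ^+ 2 = affine_sq_sum u v b%:R - affine_sq_sum u v a%:R.
Proof.
move=> ab; rewrite (telescope_sumr_eq (fun m => affine_sq_sum u v m%:R)) // => j _.
by rewrite /affine_sq_sum -natr1; field.
Qed.

Lemma natr_subS (R : pzRingType) (m j : nat) :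
  (j < m)%N -> (m - j.+1)%:R = m%:R - 1 - j%:R :> R.
Proof. by move=> jm; rewrite natrB // -natr1 opprD addrA addrAC. Qed.

Lemma sum_natr (R : numFieldType) (a b : nat) : (a <= b)%N ->
  \sum_(a <= j < b) (j%:R : R) = (b%:R * (b%:R - 1) - a%:R * (a%:R - 1)) / 2.
Proof.
move=> ab; rewrite (telescope_sumr_eq (fun m => m%:R * (m%:R - 1) / 2 : R)) //.
  by rewrite mulrBl.
by move=> j _; rewrite -natr1; field.
Qed.

Lemma sum_leq_indicator (n d : nat) : \sum_(0 <= j < n) ((d <= j)%N%:R : rat) = (n - d)%:R.
Proof.
elim: n => [|n IH]; first by rewrite big_geq.
by rewrite big_nat_recr //= IH -natrD; congr _%:R; lia.
Qed.

Lemma sum_sqr_sub_leq_indicator (n d : nat) :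
  \sum_(0 <= j < n) ((d <= j)%N%:R - (d <= n - j.+1)%N%:R : rat) ^+ 2 =
  (2 * minn d (n - d))%:R.
Proof.
pose a := minn d (n - d).
rewrite (@big_nat_piecewise3 _ a (n - a) n _ (fun=> 1) (fun=> 0) (fun=> 1));
  [| lia | move=> j hj; case: leqP => h1; case: leqP => h2 /=; first [lra | exfalso; lia] ..].
rewrite !sumr_const_nat mul0rn addr0 -natrD; congr _%:R; lia.
Qed.

Lemma Var_XPsi_Phi_eq n d : (0 < d)%N ->
  Var (XPsi (Phi_eq n d)) = ((n - d)%:R + (2 * minn d (n - d))%:R) / 12.
Proof.
move=> d0; rewrite (Var_XPsi_height n (fun m => count_pred1_iota m d0)).
by rewrite sum_leq_indicator sum_sqr_sub_leq_indicator.
Qed.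

Lemma sum_minn_natr (n d : nat) : (d <= n)%N ->
  \sum_(0 <= j < n) ((minn d j)%:R : rat) = d%:R * (n%:R - d%:R) + d%:R * (d%:R - 1) / 2.
Proof.
move=> dn; rewrite (@big_nat_piecewise _ 0 d n _ (fun j => j%:R) (fun=> d%:R));
  [| lia | move=> j hj; rewrite minnC /minn; case: ltnP => h; first [exfalso; lia | done] ..].
by rewrite sum_natr // sumr_const_nat -[_ *+ (n - d)]mulr_natr natrB //; ring.
Qed.

(* [minnC] makes ties between [d] and the other argument resolve to [d], which
   is the value the pieces below prescribe at their boundaries. *)
Lemma Var_XPsi_Phi_le_small n d : (2 * d <= n)%N ->
  Var (XPsi (Phi_le n d)) = d%:R ^+ 3 / 18 + d%:R ^+ 2 / 24 + (n%:R / 12 - 1 / 72) * d%:R.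
Proof.
move=> dn; rewrite (Var_XPsi_height n (fun m => count_leq_iota d m)) sum_minn_natr; last lia.
rewrite (@big_nat_piecewise3 _ d (n - d) n _
  (fun j => (- d%:R + 1 * j%:R) ^+ 2) (fun=> 0) (fun j => (d%:R - n%:R + 1 + 1 * j%:R) ^+ 2));
  [| lia | move=> j hj; rewrite ![minn d _]minnC /minn; case: ltnP => h1; case: ltnP => h2;
           first [exfalso; lia | rewrite ?natr_subS; [ring | lia] | ring] ..].
rewrite !sum_affine_sq ?sumr_const_nat ?mul0rn; try lia.
rewrite natrB; last lia.
by rewrite /affine_sq_sum; field.
Qed.

Lemma Var_XPsi_Phi_le_large n d : (d <= n)%N -> (n <= 2 * d)%N ->
  Var (XPsi (Phi_le n d)) =
  - (d%:R ^+ 3 / 6) + (n%:R / 3 - 7 / 24) * d%:R ^+ 2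
  + (- (n%:R ^+ 2 / 6) + 5 / 12 * n%:R - 1 / 8) * d%:R
  + (n%:R ^+ 3 / 36 - n%:R ^+ 2 / 12 + n%:R / 18).
Proof.
move=> dn nd; rewrite (Var_XPsi_height n (fun m => count_leq_iota d m)) sum_minn_natr //.
rewrite (@big_nat_piecewise3 _ (n - d) d n _
  (fun j => (- d%:R + 1 * j%:R) ^+ 2) (fun j => (1 - n%:R + 2 * j%:R) ^+ 2)
  (fun j => (d%:R - n%:R + 1 + 1 * j%:R) ^+ 2));
  [| lia | move=> j hj; rewrite ![minn d _]minnC /minn; case: ltnP => h1; case: ltnP => h2;
           first [exfalso; lia | rewrite ?natr_subS; [ring | lia] | ring] ..].
rewrite !sum_affine_sq ?natrB //; try lia.
by rewrite /affine_sq_sum; field.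
Qed.

Theorem theoremA1 (n d : nat) (hd0 : (0 < d)%N) (hdn : (d <= n)%N) :
  let N : rat := n%:R in
  let D : rat := d%:R in
  ((2 * d <= n)%N -> Var (XPsi (Phi_eq n d)) = (N + D) / 12) /\
  ((n <= 2 * d)%N -> Var (XPsi (Phi_eq n d)) = (N - D) / 4) /\
  ((2 * d <= n)%N -> Var (XPsi (Phi_le n d)) =
      D ^+ 3 / 18 + D ^+ 2 / 24 + (N / 12 - 1 / 72) * D) /\
  ((n <= 2 * d)%N -> Var (XPsi (Phi_le n d)) =
      - (D ^+ 3 / 6) + (N / 3 - 7 / 24) * D ^+ 2
      + (- (N ^+ 2 / 6) + 5 / 12 * N - 1 / 8) * D
      + (N ^+ 3 / 36 - N ^+ 2 / 12 + N / 18)).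
Proof.
move=> N D; split; [|split; [|split]] => hd.
- rewrite Var_XPsi_Phi_eq // (_ : minn d (n - d) = d); last lia.
  by rewrite /N /D natrB ?natrM; [lra | lia].
- rewrite Var_XPsi_Phi_eq // (_ : minn d (n - d) = (n - d)%N); last lia.
  by rewrite /N /D natrM natrB //; lra.
- exact: Var_XPsi_Phi_le_small.
- exact: Var_XPsi_Phi_le_large.
Qed.
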